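(* Let $K$ be a positive definite kernel on $\Omega\subset\mathbb{R}^d$, $X_n=\{x_1,\dots,x_n\}\subset\Omega$ pairwise distinct, $\lambda>0$ and $0\le\mu\le\lambda$, where in case $\mu=0$ the kernel $K$ is assumed strictly positive definite. Then for all $x\in\Omega$ $$Q_n^\lambda(x)^2\le P_n^\mu(x)^2+\lambda\left(1+\Lambda_{n,2}^\mu(x)^2\right),$$ and equality holds if $\mu=\lambda$ and $x\notin X_n$.
   Context: A kernel is positive definite if symmetric with positive semidefinite kernel matrices on pairwise distinct points (strictly: positive definite). $\mathcal{H}$ is the native space (RKHS) of $K$; $\delta(x,y)=1$ if $x=y$, else $0$; $K_\lambda:=K+\lambda\delta$ with native space $\mathcal{H}_\lambda$. Let $A=(K(x_i,x_j))_{i,j=1}^n$. For $f:\Omega\to\mathbb{R}$: $s_n^\mu(f):=\sum_j\alpha_jK(\cdot,x_j)$ with $(A+\mu I)\alpha=(f(x_i))_i$, and $I_n^\lambda(f):=\sum_j\alpha_jK_\lambda(\cdot,x_j)$ with $(A+\lambda I)\alpha=(f(x_i))_i$. $P_n^\mu(x):=\sup_{f\in\mathcal{H},f\ne0}|f(x)-s_n^\mu(f)(x)|/\|f\|_{\mathcal{H}}$ and $Q_n^\lambda(x):=\sup_{f\in\mathcal{H}_\lambda,f\ne0}|f(x)-I_n^\lambda(f)(x)|/\|f\|_{\mathcal{H}_\lambda}$. The Lagrange functions are $\ell_j^\mu:=\sum_{i=1}^n((A+\mu I)^{-1})_{ij}K(\cdot,x_i)$ and the $\ell_2$-Lebesgue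 function is $\Lambda_{n,2}^\mu(x):=\big(\sum_{j=1}^n\ell_j^\mu(x)^2\big)^{1/2}$. *)

From HB Require Import structures.
From mathcomp Require Import all_boot all_order all_algebra.
From mathcomp Require Import all_classical all_reals.
Set Implicit Arguments. Unset Strict Implicit. Unset Printing Implicit Defensive.
Import Order.TTheory GRing.Theory Num.Theory.
Local Open Scope ring_scope.
Local Open Scope classical_set_scope.

Section Kernels.
Variables (R : realType) (d : nat).
Local Notation V := 'rV[R]_d.

Definition kquad (K : V -> V -> R) (m : nat) (y : 'I_m -> V) (c : 'I_m -> R) : R :=
  \sum_(i < m) \sum_(j < m) c i * c j * K (y i) (y j).

Definition pos_def (Omega : set V) (K : V -> V -> R) : Prop :=
  (forall x y, Omega x -> Omega y -> K x y = K y x) /\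
  (forall (m : nat) (y : 'I_m -> V) (c : 'I_m -> R),
     injective y -> (forall i, Omega (y i)) -> 0 <= kquad K y c).

Definition strict_pos_def (Omega : set V) (K : V -> V -> R) : Prop :=
  pos_def Omega K /\
  (forall (m : nat) (y : 'I_m -> V) (c : 'I_m -> R),
     injective y -> (forall i, Omega (y i)) -> (exists i, c i != 0) ->
     0 < kquad K y c).

Definition kdelta (x y : V) : R := if x == y then 1 else 0.
Definition kreg (K : V -> V -> R) (lam : R) : V -> V -> R :=
  fun x y => K x y + lam * kdelta x y.

(* Native space (RKHS) of K on Omega, via the standard characterisation:
   f in H iff there is C >= 0 with
     (sum_i c_i f(y_i))^2 <= C * sum_ij c_i c_j K(y_i,y_j)
   for all finite families of points of Omega; ||f||_H^2 is the least such C. *)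
Definition native_bounds (Omega : set V) (K : V -> V -> R) (f : V -> R) : set R :=
  [set C | 0 <= C /\
     forall (m : nat) (y : 'I_m -> V) (c : 'I_m -> R),
       (forall i, Omega (y i)) ->
       (\sum_(i < m) c i * f (y i)) ^+ 2 <= C * kquad K y c].

Definition in_native (Omega : set V) (K : V -> V -> R) (f : V -> R) : Prop :=
  native_bounds Omega K f !=set0.

Definition native_norm (Omega : set V) (K : V -> V -> R) (f : V -> R) : R :=
  Num.sqrt (inf (native_bounds Omega K f)).

Definition nonzero_on (Omega : set V) (f : V -> R) : Prop :=
  exists y, Omega y /\ f y != 0.

Definition kmat (K : V -> V -> R) (n : nat) (X : 'I_n -> V) : 'M[R]_n :=
  \matrix_(i, j) K (X i) (X j).

Definition coeffs (K : V -> V -> R) (n : nat) (X : 'I_n -> V) (mu : R)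
    (f : V -> R) : 'cV[R]_n :=
  invmx (kmat K X + mu%:M) *m \col_i f (X i).

Definition s_approx (K : V -> V -> R) (n : nat) (X : 'I_n -> V) (mu : R)
    (f : V -> R) : V -> R :=
  fun x => \sum_(j < n) coeffs K X mu f j 0 * K x (X j).

Definition I_approx (K : V -> V -> R) (n : nat) (X : 'I_n -> V) (lam : R)
    (f : V -> R) : V -> R :=
  fun x => \sum_(j < n) coeffs K X lam f j 0 * kreg K lam x (X j).

Definition P_fun (Omega : set V) (K : V -> V -> R) (n : nat) (X : 'I_n -> V)
    (mu : R) (x : V) : R :=
  sup [set r | exists f, in_native Omega K f /\ nonzero_on Omega f /\
         r = `|f x - s_approx K X mu f x| / native_norm Omega K f].

Definition Q_fun (Omega : set V) (K : V -> V -> R) (n : nat) (X : 'I_n -> V)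
    (lam : R) (x : V) : R :=
  sup [set r | exists f, in_native Omega (kreg K lam) f /\ nonzero_on Omega f /\
         r = `|f x - I_approx K X lam f x| / native_norm Omega (kreg K lam) f].

Definition lagrange (K : V -> V -> R) (n : nat) (X : 'I_n -> V) (mu : R)
    (j : 'I_n) (x : V) : R :=
  \sum_(i < n) invmx (kmat K X + mu%:M) i j * K x (X i).

Definition lebesgue2 (K : V -> V -> R) (n : nat) (X : 'I_n -> V) (mu : R)
    (x : V) : R :=
  Num.sqrt (\sum_(j < n) lagrange K X mu j x ^+ 2).

End Kernels.

From Pilot Require Import Defs.
From HB Require Import structures.
From mathcomp Require Import all_boot all_order all_algebra.
From mathcomp Require Import all_classical all_reals.
From mathcomp Require Import ring lra.
Import Order.TTheory GRing.Theory Num.Theory.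
Local Open Scope ring_scope.
Local Open Scope classical_set_scope.
Set Implicit Arguments. Unset Strict Implicit.

(* For a positive definite kernel k and points z_i, the supremum of
   |sum_i c_i f(z_i)| / ||f|| over the native space is the square root of the
   quadratic form sum_ij c_i c_j k(z_i, z_j): the bound is the definition of the
   native norm, and by Cauchy-Schwarz for k it is attained at
   f = sum_i c_i k(., z_i).  With the points (x, x_1, ..., x_n) and coefficients
   (1, -w) this identifies P_n^mu(x)^2 and Q_n^lambda(x)^2 with the power forms
   of K and K_lambda at the Lagrange weights of s_n^mu and I_n^lambda.  The
   weights of I_n^lambda minimise the power form of K_lambda (their linear
   system is its normal equation), and for x outside X_n that form is the power
   form of K plus lambda (1 + |w|^2).  Evaluating it at the Lagrange weights of
   s_n^mu gives the inequality, an equality when mu = lambda; at a node x = x_i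
   the left-hand side vanishes. *)

Lemma sum_delta_mul (R : ringType) n (i0 : 'I_n) (g : 'I_n -> R) :
  \sum_(i < n) (i == i0)%:R * g i = g i0.
Proof.
rewrite (bigD1 i0) //= eqxx mul1r big1 ?addr0 // => i /negbTE ->.
by rewrite mul0r.
Qed.

Lemma sum_mul_fibers (R : ringType) m (phi : 'I_m -> 'I_m) (c F : 'I_m -> R) :
  \sum_(b < m) c b * F (phi b) = \sum_(b' < m) (\sum_(b < m | phi b == b') c b) * F b'.
Proof.
rewrite (partition_big phi predT) //=; apply: eq_bigr => b' _.
by rewrite mulr_suml; apply: eq_bigr => b /eqP <-.
Qed.

Definition catf T m1 m2 (f1 : 'I_m1 -> T) (f2 : 'I_m2 -> T) : 'I_(m1 + m2) -> T :=
  fun i => match fintype.split i with inl a => f1 a | inr b => f2 b end.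

Lemma catf_lshift T m1 m2 (f1 : 'I_m1 -> T) (f2 : 'I_m2 -> T) a :
  catf f1 f2 (lshift m2 a) = f1 a.
Proof. by rewrite /catf (unsplitK (inl a)). Qed.

Lemma catf_rshift T m1 m2 (f1 : 'I_m1 -> T) (f2 : 'I_m2 -> T) b :
  catf f1 f2 (rshift m1 b) = f2 b.
Proof. by rewrite /catf (unsplitK (inr b)). Qed.

Lemma discriminant_le (R : realFieldType) (a b q : R) : 0 < q ->
  (forall t, 0 <= a + 2 * t * b + t ^+ 2 * q) -> b ^+ 2 <= a * q.
Proof.
move=> q_gt0 /(_ (- b / q)).
have -> : a + 2 * (- b / q) * b + (- b / q) ^+ 2 * q = a - b ^+ 2 / q.
  by field; rewrite gt_eqF.
by rewrite subr_ge0 ler_pdivrMr.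
Qed.

Lemma sum_mulmx_col (F : comRingType) n (M : 'M[F]_n) (a g : 'I_n -> F) :
  \sum_(j < n) (M *m \col_i a i) j 0 * g j
  = \sum_(i < n) (\sum_(j < n) M j i * g j) * a i.
Proof.
under eq_bigr do rewrite !mxE big_distrl /=.
rewrite exchange_big; apply: eq_bigr => i _; rewrite big_distrl.
by apply: eq_bigr => j _; rewrite !mxE mulrAC.
Qed.

Lemma quadratic_form_shift (F : comRingType) n (G : 'M[F]_n) (b u w : 'rV[F]_n) :
  G^T = G -> u *m G = b ->
  (w *m G *m w^T) 0 0 - 2 * (w *m b^T) 0 0
  = (u *m G *m u^T) 0 0 - 2 * (u *m b^T) 0 0 + ((w - u) *m G *m (w - u)^T) 0 0.
Proof.
move=> G_sym uG; rewrite -[w in LHS](subrK u); move: (w - u) => D.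
have entryD (A B : 'M[F]_1) : (A + B) 0 0 = A 0 0 + B 0 0 by rewrite mxE.
have entryT (A : 'M[F]_1) : A^T 0 0 = A 0 0 by rewrite mxE.
have cross1 : (u *m G *m D^T) 0 0 = (D *m b^T) 0 0.
  by rewrite uG -entryT trmx_mul trmxK.
have cross2 : (D *m G *m u^T) 0 0 = (D *m b^T) 0 0.
  by rewrite -entryT !trmx_mul trmxK G_sym mulmxA cross1.
rewrite linearD /= !mulmxDl !mulmxDr !entryD cross1 cross2; ring.
Qed.

Lemma unitmx_coercive (F : realFieldType) n (G : 'M[F]_n) a : 0 < a ->
  (forall v : 'rV[F]_n, a * (v *m v^T) 0 0 <= (v *m G *m v^T) 0 0) -> G \in unitmx.
Proof.
move=> a_gt0 G_coer; rewrite -row_free_unit -kermx_eq0.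
apply/eqP/row_matrixP => i; rewrite row0.
move: (row i _) (row_sub i (kermx G)) => v /sub_kermxP vG.
have := G_coer v; rewrite vG mul0mx !mxE pmulr_rle0 // => vv_le0.
have sq_ge0 j : true -> 0 <= v 0 j * v^T j 0 by rewrite mxE -expr2 sqr_ge0.
have vv0 : \sum_j v 0 j * v^T j 0 = 0 by apply/eqP; rewrite eq_le vv_le0 sumr_ge0.
apply/rowP => j; have := psumr_eq0P sq_ge0 vv0 (i := j) isT.
by rewrite !mxE -expr2 => /eqP; rewrite sqrf_eq0 => /eqP.
Qed.

Lemma sup_eq_ub (R : realType) (S : set R) x : S x -> ubound S x -> sup S = x.
Proof.
move=> Sx x_ub; apply/eqP; rewrite eq_le; apply/andP; split.
  by apply: ge_sup => //; exists x.
by apply: ub_le_sup => //; exists x.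
Qed.

Lemma sup_eq0 (R : realType) (S : set R) : S `<=` [set 0] -> sup S = 0.
Proof.
move=> S0; have [[r Sr]|S_empty] := pselect (exists r, S r).
  have -> : S = [set 0] by apply/seteqP; split=> // s ->; rewrite -(S0 r Sr).
  exact: sup1.
have -> : S = set0 by apply/seteqP; split=> // s Ss; apply: S_empty; exists s.
exact: sup0.
Qed.

Section KernelQuadraticForms.
Variables (R : realType) (d : nat).
Local Notation V := 'rV[R]_d.
Implicit Types (Omega : set V) (k : V -> V -> R).

Definition kcross k m1 (y1 : 'I_m1 -> V) (c1 : 'I_m1 -> R)
    m2 (y2 : 'I_m2 -> V) (c2 : 'I_m2 -> R) : R :=
  \sum_(a < m1) \sum_(b < m2) c1 a * c2 b * k (y1 a) (y2 b).

Definition kspan k m (z : 'I_m -> V) (c : 'I_m -> R) : V -> R :=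
  fun y => \sum_(i < m) c i * k y (z i).

Lemma kquad_kreg k lam m (y : 'I_m -> V) c :
  kquad (kreg k lam) y c = kquad k y c + lam * kquad (@kdelta R d) y c.
Proof.
rewrite /kquad /kreg mulr_sumr -big_split; apply: eq_bigr => i _.
by rewrite mulr_sumr -big_split; apply: eq_bigr => j _ /=; ring.
Qed.

Lemma kquad_kdelta m (y : 'I_m -> V) c :
  injective y -> kquad (@kdelta R d) y c = \sum_(i < m) c i ^+ 2.
Proof.
move=> y_inj; apply: eq_bigr => i _.
rewrite (bigD1 i) //= /kdelta eqxx mulr1 big1 ?addr0 ?expr2 // => j ji.
by rewrite (inj_eq y_inj) eq_sym (negbTE ji) mulr0.
Qed.

Lemma kquad_mx k m (y : 'I_m -> V) c :
  kquad k y c = ((\row_i c i) *m kmat k y *m (\row_i c i)^T) 0 0.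
Proof.
rewrite /kquad mxE exchange_big; apply: eq_bigr => j _.
by rewrite !mxE mulr_suml; apply: eq_bigr => i _; rewrite !mxE; ring.
Qed.

Lemma kquad_merge k m (y : 'I_m -> V) c (phi : 'I_m -> 'I_m) :
  (forall a, y (phi a) = y a) ->
  kquad k y c = kquad k y (fun b' => \sum_(b < m | phi b == b') c b).
Proof.
move=> y_phi; rewrite /kquad.
transitivity (\sum_(i < m) c i * \sum_(j < m) c j * k (y (phi i)) (y (phi j))).
  apply: eq_bigr => i _; rewrite mulr_sumr.
  by apply: eq_bigr => j _; rewrite !y_phi mulrA.
rewrite (sum_mul_fibers phi c (fun i' => \sum_(j < m) c j * k (y i') (y (phi j)))).
apply: eq_bigr => i _.
rewrite (sum_mul_fibers phi c (fun j' => k (y i) (y j'))) mulr_sumr.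
by apply: eq_bigr => j _; rewrite mulrA.
Qed.

Lemma kquad_lift k m (y : 'I_m.+1 -> V) c (j : 'I_m.+1) :
  c j = 0 -> kquad k y c = kquad k (fun a => y (lift j a)) (fun a => c (lift j a)).
Proof.
move=> cj0; rewrite /kquad (bigD1_ord j) //= big1 ?add0r => [|i _]; last first.
  by rewrite cj0 !mul0r.
by apply: eq_bigr => i _; rewrite (bigD1_ord j) //= cj0 mulr0 mul0r add0r.
Qed.

(* pos_def only speaks about pairwise distinct points; a repeated point is
   eliminated by moving its coefficient onto the other copy. *)
Lemma pos_def_kquad_ge0 Omega k : pos_def Omega k ->
  forall m (y : 'I_m -> V) c, (forall i, Omega (y i)) -> 0 <= kquad k y c.
Proof.
move=> [_ psd]; elim=> [|m IH] y c yO; first by rewrite /kquad big_ord0.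
have [/injectiveP y_inj|/injectivePn [i [j nij yij]]] := boolP (injectiveb y).
  exact: psd.
pose phi a := if a == j then i else a.
have y_phi a : y (phi a) = y a by rewrite /phi; case: eqP => // ->.
rewrite (kquad_merge k c y_phi) (@kquad_lift k m y _ j) ?IH // /phi.
apply: big1 => b /eqP; case: eqP => [_ bi|bj bj'].
  by move: nij; rewrite bi eqxx.
by move: bj; rewrite bj'.
Qed.

Lemma pos_def_kreg Omega k lam :
  pos_def Omega k -> 0 <= lam -> pos_def Omega (kreg k lam).
Proof.
move=> [k_sym psd] lam_ge0; split=> [x y xO yO|m y c y_inj yO].
  by rewrite /kreg /kdelta k_sym // eq_sym.
rewrite kquad_kreg kquad_kdelta // addr_ge0 ?psd // mulr_ge0 //.
by apply: sumr_ge0 => i _; exact: sqr_ge0.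
Qed.

Lemma kquad_catf Omega k m1 (y1 : 'I_m1 -> V) c1 m2 (y2 : 'I_m2 -> V) c2 :
  (forall x y, Omega x -> Omega y -> k x y = k y x) ->
  (forall i, Omega (y1 i)) -> (forall i, Omega (y2 i)) ->
  kquad k (catf y1 y2) (catf c1 c2)
  = kquad k y1 c1 + 2 * kcross k y1 c1 y2 c2 + kquad k y2 c2.
Proof.
move=> k_sym y1O y2O; rewrite /kquad big_split_ord /=.
rewrite (eq_bigr (fun a => \sum_(j < m1) c1 a * c1 j * k (y1 a) (y1 j)
    + \sum_(b < m2) c1 a * c2 b * k (y1 a) (y2 b))) => [|a _]; last first.
  rewrite big_split_ord /=; congr (_ + _); apply: eq_bigr => j _.
    by rewrite !catf_lshift.
  by rewrite !catf_lshift !catf_rshift.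
rewrite [X in _ + X](eq_bigr (fun b => \sum_(a < m1) c1 a * c2 b * k (y1 a) (y2 b)
    + \sum_(j < m2) c2 b * c2 j * k (y2 b) (y2 j))) => [|b _]; last first.
  rewrite big_split_ord /=; congr (_ + _); apply: eq_bigr => a _.
    by rewrite !catf_lshift !catf_rshift (k_sym _ _ (y2O b) (y1O a)) [c2 b * _]mulrC.
  by rewrite !catf_rshift.
have cross_swap : \sum_(b < m2) \sum_(a < m1) c1 a * c2 b * k (y1 a) (y2 b)
    = kcross k y1 c1 y2 c2 by rewrite /kcross exchange_big.
by rewrite !big_split /= cross_swap -/(kcross k y1 c1 y2 c2); ring.
Qed.

Lemma kquad_scale k m (y : 'I_m -> V) c t :
  kquad k y (fun i => t * c i) = t ^+ 2 * kquad k y c.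
Proof.
rewrite /kquad mulr_sumr; apply: eq_bigr => i _.
by rewrite mulr_sumr; apply: eq_bigr => j _; ring.
Qed.

Lemma kcross_scale k m1 (y1 : 'I_m1 -> V) c1 m2 (y2 : 'I_m2 -> V) c2 t :
  kcross k y1 c1 y2 (fun b => t * c2 b) = t * kcross k y1 c1 y2 c2.
Proof.
rewrite /kcross mulr_sumr; apply: eq_bigr => a _.
by rewrite mulr_sumr; apply: eq_bigr => b _; ring.
Qed.

Lemma kcross_cauchy_schwarz Omega k m1 (y1 : 'I_m1 -> V) c1 m2 (y2 : 'I_m2 -> V) c2 :
  pos_def Omega k -> (forall i, Omega (y1 i)) -> (forall i, Omega (y2 i)) ->
  0 < kquad k y2 c2 ->
  kcross k y1 c1 y2 c2 ^+ 2 <= kquad k y1 c1 * kquad k y2 c2.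
Proof.
move=> k_pd y1O y2O q_gt0; apply: discriminant_le => // t.
have catO i : Omega (catf y1 y2 i) by rewrite /catf; case: fintype.split.
have := pos_def_kquad_ge0 k_pd (catf c1 (fun b => t * c2 b)) catO.
by rewrite (kquad_catf c1 _ k_pd.1 y1O y2O) kquad_scale kcross_scale mulrA.
Qed.

Lemma native_bound_le_inf Omega k f m (z : 'I_m -> V) c :
  in_native Omega k f -> (forall i, Omega (z i)) -> 0 <= kquad k z c ->
  (\sum_(i < m) c i * f (z i)) ^+ 2 <= inf (native_bounds Omega k f) * kquad k z c.
Proof.
move=> [C0 C0B] zO q_ge0; have [q0|q_neq0] := eqVneq (kquad k z c) 0.
  by case: C0B => _ /(_ m z c zO); rewrite q0 !mulr0.
have q_gt0 : 0 < kquad k z c by rewrite lt_neqAle eq_sym q_neq0.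
rewrite -ler_pdivrMr //; apply: lb_le_inf; first by exists C0.
by move=> C [_ CB]; rewrite ler_pdivrMr //; apply: CB.
Qed.

Lemma native_inf_ge0 Omega k f :
  in_native Omega k f -> 0 <= inf (native_bounds Omega k f).
Proof. by move=> f_in; apply: lb_le_inf => // C []. Qed.

Lemma native_ratio_le Omega k f m (z : 'I_m -> V) c :
  in_native Omega k f -> (forall i, Omega (z i)) -> 0 <= kquad k z c ->
  `|\sum_(i < m) c i * f (z i)| / native_norm Omega k f <= Num.sqrt (kquad k z c).
Proof.
move=> f_in zO q_ge0; have := native_bound_le_inf f_in zO q_ge0.
rewrite /native_norm; have := native_inf_ge0 f_in.
set I := inf _; set s := \sum_(i < m) _ => I_ge0 s_le.
have [->|I_neq0] := eqVneq I 0; first by rewrite sqrtr0 invr0 mulr0 sqrtr_ge0.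
have I_gt0 : 0 < I by rewrite lt_neqAle eq_sym I_neq0.
rewrite ler_pdivrMr ?sqrtr_gt0 // -sqrtrM // -sqrtr_sqr ler_sqrt ?mulr_ge0 //.
by rewrite mulrC.
Qed.

Lemma sum_kspan k m1 (y : 'I_m1 -> V) c1 m (z : 'I_m -> V) c :
  \sum_(a < m1) c1 a * kspan k z c (y a) = kcross k y c1 z c.
Proof.
by apply: eq_bigr => a _; rewrite mulr_sumr; apply: eq_bigr => i _; rewrite mulrA.
Qed.

Lemma sum_kspan_self k m (z : 'I_m -> V) c :
  \sum_(i < m) c i * kspan k z c (z i) = kquad k z c.
Proof. exact: sum_kspan. Qed.

Lemma native_bounds_kspan Omega k m (z : 'I_m -> V) c :
  pos_def Omega k -> (forall i, Omega (z i)) -> 0 < kquad k z c ->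
  native_bounds Omega k (kspan k z c) (kquad k z c).
Proof.
move=> k_pd zO q_gt0; split=> [|m' y c' yO]; first exact: ltW.
by rewrite sum_kspan mulrC; exact: (kcross_cauchy_schwarz c' k_pd yO zO q_gt0).
Qed.

Lemma native_norm_kspan Omega k m (z : 'I_m -> V) c :
  pos_def Omega k -> (forall i, Omega (z i)) -> 0 < kquad k z c ->
  native_norm Omega k (kspan k z c) = Num.sqrt (kquad k z c).
Proof.
move=> k_pd zO q_gt0; have qB := native_bounds_kspan k_pd zO q_gt0.
rewrite /native_norm; congr Num.sqrt; apply/eqP; rewrite eq_le; apply/andP; split.
  by apply: ge_inf => //; exists 0 => C [].
apply: lb_le_inf; first by exists (kquad k z c).
by move=> C [_ /(_ m z c zO)]; rewrite sum_kspan_self expr2 ler_pM2r.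
Qed.

Lemma sup_native_ratio Omega k m (z : 'I_m -> V) c :
  pos_def Omega k -> (forall i, Omega (z i)) ->
  sup [set r | exists f, in_native Omega k f /\ nonzero_on Omega f /\
         r = `|\sum_(i < m) c i * f (z i)| / native_norm Omega k f]
  = Num.sqrt (kquad k z c).
Proof.
move=> k_pd zO; set S := [set r | _].
have q_ge0 := pos_def_kquad_ge0 k_pd c zO.
have S_ub : ubound S (Num.sqrt (kquad k z c)).
  by move=> r [f [f_in [_ ->]]]; apply: native_ratio_le.
have [q0|q_neq0] := eqVneq (kquad k z c) 0.
  rewrite q0 sqrtr0 in S_ub *; apply: sup_eq0 => r Sr.
  apply/eqP; rewrite eq_le S_ub //.
  by case: Sr => f [_ [_ ->]]; rewrite divr_ge0 ?sqrtr_ge0.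
have q_gt0 : 0 < kquad k z c by rewrite lt_neqAle eq_sym q_neq0.
have [i f0_neq0] : exists i, kspan k z c (z i) != 0.
  apply/existsP; apply: contraNT q_neq0 => /existsPn f0z; rewrite -sum_kspan_self.
  by apply/eqP/big1 => i _; move/negPn/eqP: (f0z i) => ->; rewrite mulr0.
apply: sup_eq_ub S_ub; exists (kspan k z c); split.
  by exists (kquad k z c); exact: native_bounds_kspan.
split; first by exists (z i).
rewrite sum_kspan_self native_norm_kspan // ger0_norm //.
by rewrite -[X in _ = X / _](sqr_sqrtr q_ge0) expr2 mulfK // gt_eqF // sqrtr_gt0.
Qed.

Definition cons_point x n (X : 'I_n -> V) : 'I_n.+1 -> V :=
  fun i => if unlift ord0 i is Some j then X j else x.

Definition residual_weights n (v : 'I_n -> R) : 'I_n.+1 -> R :=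
  fun i => if unlift ord0 i is Some j then - v j else 1.

Definition power_form k x n (X : 'I_n -> V) (v : 'I_n -> R) : R :=
  kquad k (cons_point x X) (residual_weights v).

Lemma cons_point0 x n (X : 'I_n -> V) : cons_point x X ord0 = x.
Proof. by rewrite /cons_point unlift_none. Qed.

Lemma cons_pointS x n (X : 'I_n -> V) j : cons_point x X (lift ord0 j) = X j.
Proof. by rewrite /cons_point liftK. Qed.

Lemma residual_weights0 n (v : 'I_n -> R) : residual_weights v ord0 = 1.
Proof. by rewrite /residual_weights unlift_none. Qed.

Lemma residual_weightsS n (v : 'I_n -> R) j : residual_weights v (lift ord0 j) = - v j.
Proof. by rewrite /residual_weights liftK. Qed.

Lemma cons_point_inj x n (X : 'I_n -> V) :
  injective X -> (forall i, X i != x) -> injective (cons_point x X).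
Proof.
move=> X_inj X_neq a b.
case: (unliftP ord0 a) => [i|] ->; case: (unliftP ord0 b) => [j|] ->;
  rewrite ?cons_pointS ?cons_point0 // => eq_ab.
- by rewrite (X_inj _ _ eq_ab).
- by move: (X_neq i); rewrite eq_ab eqxx.
- by move: (X_neq j); rewrite -eq_ab eqxx.
Qed.

Lemma cons_point_in Omega x n (X : 'I_n -> V) :
  Omega x -> (forall i, Omega (X i)) -> forall i, Omega (cons_point x X i).
Proof. by move=> xO XO i; rewrite /cons_point; case: unlift. Qed.

Lemma power_form_ge0 Omega k x n (X : 'I_n -> V) v :
  pos_def Omega k -> Omega x -> (forall i, Omega (X i)) -> 0 <= power_form k x X v.
Proof.
move=> k_pd xO XO.
exact: (pos_def_kquad_ge0 k_pd (residual_weights v) (cons_point_in xO XO)).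
Qed.

Lemma sum_residual_weights x n (X : 'I_n -> V) v (f : V -> R) :
  \sum_(a < n.+1) residual_weights v a * f (cons_point x X a)
  = f x - \sum_(i < n) v i * f (X i).
Proof.
rewrite big_ord_recl residual_weights0 cons_point0 mul1r -sumrN; congr (_ + _).
by apply: eq_bigr => i _; rewrite residual_weightsS cons_pointS mulNr.
Qed.

Lemma power_formE k x n (X : 'I_n -> V) v :
  power_form k x X v = k x x - \sum_(i < n) v i * k x (X i)
                       - \sum_(i < n) v i * k (X i) x + kquad k X v.
Proof.
pose g y := k y x - \sum_(j < n) v j * k y (X j).
rewrite /power_form /kquad.
transitivity (\sum_(a < n.+1) residual_weights v a * g (cons_point x X a)).
  apply: eq_bigr => a _; rewrite /g.
  rewrite -(sum_residual_weights x X v (k (cons_point x X a))) mulr_sumr.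
  by apply: eq_bigr => b _; rewrite mulrA.
rewrite sum_residual_weights /g.
under [X in _ - X = _]eq_bigr do
  rewrite mulrBr mulr_sumr (eq_bigr _ (fun j _ => mulrA _ _ _)).
by rewrite sumrB opprB addrA addrAC.
Qed.

Lemma power_form_node k n (X : 'I_n -> V) i0 :
  power_form k (X i0) X (fun i => (i == i0)%:R) = 0.
Proof.
rewrite power_formE /kquad !sum_delta_mul.
under eq_bigr do rewrite (eq_bigr _ (fun j _ => esym (mulrA _ _ _))) -mulr_sumr.
by rewrite sum_delta_mul sum_delta_mul subrr sub0r addNr.
Qed.

Lemma power_form_kreg k lam x n (X : 'I_n -> V) v :
  injective X -> (forall i, X i != x) ->
  power_form (kreg k lam) x X v
  = power_form k x X v + lam * (1 + \sum_(i < n) v i ^+ 2).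
Proof.
move=> X_inj X_neq; rewrite /power_form kquad_kreg kquad_kdelta; last first.
  exact: cons_point_inj.
rewrite big_ord_recl residual_weights0 expr1n.
by under eq_bigr do rewrite residual_weightsS sqrrN.
Qed.

Lemma sup_power_ratio Omega k x n (X : 'I_n -> V) v (approx : (V -> R) -> R) :
  pos_def Omega k -> Omega x -> (forall i, Omega (X i)) ->
  (forall f, approx f = \sum_(i < n) v i * f (X i)) ->
  sup [set r | exists f, in_native Omega k f /\ nonzero_on Omega f /\
         r = `|f x - approx f| / native_norm Omega k f] ^+ 2 = power_form k x X v.
Proof.
move=> k_pd xO XO approxE.
have ratioE f : f x - approx f
    = \sum_(a < n.+1) residual_weights v a * f (cons_point x X a).
  by rewrite sum_residual_weights approxE.
rewrite -[power_form _ _ _ _]sqr_sqrtr ?(power_form_ge0 _ k_pd) //.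
rewrite -(sup_native_ratio _ k_pd (cons_point_in xO XO)); congr (sup _ ^+ 2).
by apply/seteqP; split=> r [f [f_in [f_nz ->]]]; exists f; rewrite ratioE.
Qed.

Lemma power_form_mx Omega k x n (X : 'I_n -> V) v :
  (forall y z, Omega y -> Omega z -> k y z = k z y) ->
  Omega x -> (forall i, Omega (X i)) ->
  power_form k x X v = k x x - 2 * ((\row_i v i) *m (\row_j k x (X j))^T) 0 0
                       + ((\row_i v i) *m kmat k X *m (\row_i v i)^T) 0 0.
Proof.
move=> k_sym xO XO; rewrite power_formE -kquad_mx.
have -> : ((\row_i v i) *m (\row_j k x (X j))^T) 0 0 = \sum_(i < n) v i * k x (X i).
  by rewrite mxE; apply: eq_bigr => i _; rewrite !mxE.
have -> : \sum_(i < n) v i * k (X i) x = \sum_(i < n) v i * k x (X i).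
  by apply: eq_bigr => i _; rewrite k_sym.
ring.
Qed.

Lemma power_form_min Omega k x n (X : 'I_n -> V) (M : 'M[R]_n) w :
  pos_def Omega k -> Omega x -> (forall i, Omega (X i)) -> M *m kmat k X = 1%:M ->
  power_form k x X (fun i => \sum_(j < n) M j i * k x (X j)) <= power_form k x X w.
Proof.
move=> k_pd xO XO MG; set b := \row_j k x (X j).
have G_sym : (kmat k X)^T = kmat k X.
  by apply/matrixP => i j; rewrite !mxE k_pd.1.
have u_row : \row_i (\sum_(j < n) M j i * k x (X j)) = b *m M.
  by apply/rowP => i; rewrite !mxE; apply: eq_bigr => j _; rewrite !mxE mulrC.
have uG : b *m M *m kmat k X = b by rewrite -mulmxA MG mulmx1.
rewrite (power_form_mx _ k_pd.1 xO XO) (power_form_mx w k_pd.1 xO XO) u_row.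
have := quadratic_form_shift (\row_i w i) G_sym uG.
set D := \row_i w i - b *m M.
have : 0 <= (D *m kmat k X *m D^T) 0 0.
  have -> : D = \row_i D 0 i by apply/rowP => i; rewrite mxE.
  by rewrite -kquad_mx (pos_def_kquad_ge0 k_pd).
lra.
Qed.

Lemma kmat_kreg k lam n (X : 'I_n -> V) :
  injective X -> kmat (kreg k lam) X = kmat k X + lam%:M.
Proof.
move=> X_inj; apply/matrixP => i j; rewrite !mxE /kreg /kdelta (inj_eq X_inj).
by case: (i == j); rewrite ?mulr1 ?mulr0.
Qed.

Lemma kmat_kreg_unit Omega k lam n (X : 'I_n -> V) :
  pos_def Omega k -> (forall i, Omega (X i)) -> injective X -> 0 < lam ->
  kmat k X + lam%:M \in unitmx.
Proof.
move=> k_pd XO X_inj lam_gt0; rewrite -kmat_kreg //.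
apply: (unitmx_coercive lam_gt0) => v.
have row_v : \row_i v 0 i = v by apply/rowP => i; rewrite mxE.
have vv : (v *m v^T) 0 0 = \sum_(i < n) v 0 i ^+ 2.
  by rewrite mxE; apply: eq_bigr => i _; rewrite mxE expr2.
rewrite -[in X in _ <= X]row_v -kquad_mx kquad_kreg kquad_kdelta // vv lerDr.
exact: (pos_def_kquad_ge0 k_pd (v 0) XO).
Qed.

End KernelQuadraticForms.

Theorem proposition3p4 (R : realType) (d : nat) (Omega : set 'rV[R]_d)
    (K : 'rV[R]_d -> 'rV[R]_d -> R) (n : nat) (X : 'I_n -> 'rV[R]_d)
    (lam mu : R) :
  pos_def Omega K ->
  (forall i, Omega (X i)) -> injective X ->
  0 < lam -> 0 <= mu -> mu <= lam ->
  (mu = 0 -> strict_pos_def Omega K) ->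
  forall x, Omega x ->
    Q_fun Omega K X lam x ^+ 2
      <= P_fun Omega K X mu x ^+ 2 + lam * (1 + lebesgue2 K X mu x ^+ 2)
    /\ (mu = lam -> (forall i, X i != x) ->
        Q_fun Omega K X lam x ^+ 2
          = P_fun Omega K X mu x ^+ 2 + lam * (1 + lebesgue2 K X mu x ^+ 2)).
Proof.
move=> K_pd XO X_inj lam_gt0 _ _ _ x xO.
have L_pd := pos_def_kreg K_pd (ltW lam_gt0).
pose l i := Defs.lagrange K X mu i x.
pose u i := \sum_(j < n) invmx (kmat K X + lam%:M) j i * kreg K lam x (X j).
have P2 : P_fun Omega K X mu x ^+ 2 = power_form K x X l.
  apply: (sup_power_ratio (approx := fun f => s_approx K X mu f x)) => // f.
  exact: sum_mulmx_col.
have Q2 : Q_fun Omega K X lam x ^+ 2 = power_form (kreg K lam) x X u.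
  apply: (sup_power_ratio (approx := fun f => I_approx K X lam f x)) => // f.
  exact: sum_mulmx_col.
have L2 : lebesgue2 K X mu x ^+ 2 = \sum_(i < n) l i ^+ 2.
  by rewrite sqr_sqrtr // sumr_ge0 // => i _; exact: sqr_ge0.
have Q2_min w : power_form (kreg K lam) x X u <= power_form (kreg K lam) x X w.
  apply: (power_form_min _ L_pd xO XO).
  by rewrite kmat_kreg // mulVmx // (kmat_kreg_unit K_pd).
rewrite P2 Q2 L2; have [[i0 Xi0]|x_notin] := pselect (exists i0, X i0 = x).
  split=> [|_ /(_ i0)]; last by rewrite Xi0 eqxx.
  have := Q2_min (fun i => (i == i0)%:R); subst x; rewrite power_form_node.
  move/le_trans; apply; apply: addr_ge0; first exact: power_form_ge0 K_pd xO XO.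
  apply: mulr_ge0; first exact: ltW.
  by apply: addr_ge0 => //; apply: sumr_ge0 => i _; exact: sqr_ge0.
have X_neq i : X i != x by apply/eqP => Xi; apply: x_notin; exists i.
rewrite -!power_form_kreg //; split=> [|mu_lam _]; first exact: Q2_min.
congr power_form; apply/funext => i; rewrite /u /l /Defs.lagrange mu_lam.
by apply: eq_bigr => j _; rewrite /kreg /kdelta eq_sym (negbTE (X_neq j)) mulr0 addr0.
Qed.
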